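(* Let $q$ be a fixed positive integer, let $n$ be divisible by $q$, let $\varepsilon=\varepsilon(n)$, and let $S$ be a set of ordered $q$-tuples of distinct elements of $[n]$ with $\varepsilon^2|S|^2/n^{2q-1}\gg\log n$. Let $\sigma$ be a uniformly random permutation of $[n]$ and let $N=|S\cap V(D_\sigma)|$, where $V(D_\sigma)=\{(\sigma((i-1)q+1),\dots,\sigma(iq)):i=1,\dots,n/q\}$. Then quite surely $N=(1\pm\varepsilon)\frac{|S|}{qn^{q-1}}$.
   Context: $a_n\gg b_n$ means $a_n/b_n\to\infty$ as $n\to\infty$; $x=(1\pm a)y$ means $(1-a)y\le x\le(1+a)y$. An event sequence $\mathcal E_n$ holds quite surely if $\Pr(\mathcal E_n)=1-O(n^{-K})$ for every positive constant $K$. *)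

From HB Require Import structures.
From mathcomp Require Import all_boot all_order all_algebra all_fingroup.
From mathcomp Require Import all_classical all_reals all_analysis.
From mathcomp Require Import zify.
Set Implicit Arguments. Unset Strict Implicit. Unset Printing Implicit Defensive.
Import Order.TTheory GRing.Theory Num.Theory.

(* Positions use 0-indexing: [n] = 'I_n with n = q * m.  Block i (i < m)
   consists of positions i*q, ..., i*q + q - 1, i.e. the paper's
   (i-1)q+1, ..., iq shifted by one. *)
Lemma blk_lt (q m : nat) (i : 'I_m) (j : 'I_q) : i * q + j < q * m.
Proof.
have := ltn_ord i; have := ltn_ord j => hj hi.
have h2 : i.+1 * q <= m * q by rewrite leq_mul2r hi orbT.
rewrite mulnC; rewrite mulSn in h2; lia.
Qed.

Definition block (q m : nat) (s : {perm 'I_(q * m)}) (i : 'I_m)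
  : q.-tuple 'I_(q * m) :=
  [tuple s (Ordinal (blk_lt i j)) | j < q].

Definition VD (q m : nat) (s : {perm 'I_(q * m)}) : {set q.-tuple 'I_(q * m)} :=
  [set block s i | i : 'I_m].

Definition Ncount (q m : nat) (S : {set q.-tuple 'I_(q * m)})
  (s : {perm 'I_(q * m)}) : nat := #|S :&: VD s|.

Definition prob_perm (R : realType) (n : nat) (E : pred {perm 'I_n}) : R :=
  (#|[set s | E s]|%:R / #|{perm 'I_n}|%:R)%R.

(* Let n = q m.  The values of a uniform random permutation, read in order, form a
   uniform random arrangement s of [n], and N = F s counts the m consecutive blocks of
   length q of s that lie in S.  Averaging over the arrangements containing a fixed
   q-tuple at a fixed block gives E F = m |S| / n^_q = (1 + O(q^2/n)) |S| / (q n^(q-1)).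
   Transposing two values of s changes F by at most 2, so revealing s one entry at a
   time (a Doob martingale) and applying Hoeffding's lemma to each step gives
   E exp(lam (F - E F)) <= exp(8 lam^2 n), hence the Chernoff bound
   P(|F - E F| >= t) <= 2 exp(-t^2 / (32 n)).  For t = eps |S| / (2 q n^(q-1)) the
   exponent is eps^2 |S|^2 / (128 q^2 n^(2q-1)), which exceeds K ln n as soon as the
   ratio in the growth hypothesis exceeds 128 q^2 K. *)

From HB Require Import structures.
From mathcomp Require Import all_boot all_order all_algebra all_fingroup.
From mathcomp Require Import all_classical all_reals all_analysis.
From mathcomp Require Import zify ring lra.
Import Order.TTheory GRing.Theory Num.Theory.
Import numFieldNormedType.Exports.
Set Implicit Arguments. Unset Strict Implicit. Unset Printing Implicit Defensive.
Local Open Scope ring_scope.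

Fixpoint arrangements (T : eqType) (k : nat) (U : seq T) : seq (seq T) :=
  if k is k'.+1 then [seq x :: t | x <- U, t <- arrangements k' (rem x U)]
  else [:: [::]].

Section Arrangements.
Variable T : eqType.
Implicit Types U t : seq T.

Lemma size_arrangements k U : size (arrangements k U) = (size U ^_ k)%N.
Proof.
elim: k U => [|k IH] U /=; first by rewrite ffactn0.
rewrite size_allpairs_dep ffactnS.
have -> : sumn [seq size (arrangements k (rem x U)) | x <- U]
          = sumn [seq ((size U).-1 ^_ k)%N | _ <- U].
  by congr sumn; apply/eq_in_map => x xU; rewrite IH size_rem.
rewrite mulnC; move: ((size U).-1 ^_ k)%N => c.
by elim: U {IH} => [|x U /= ->]; rewrite ?muln0 ?mulnS.
Qed.

Lemma size_mem_arrangements k U t : t \in arrangements k U -> size t = k.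
Proof.
elim: k U t => [|k IH] U t /=; first by rewrite inE => /eqP ->.
by case/allpairsPdep => x [t' [_ /IH ht' ->]] /=; rewrite ht'.
Qed.

Lemma mem_arrangements k U t : uniq U ->
  (t \in arrangements k U) = [&& size t == k, uniq t & all (mem U) t].
Proof.
elim: k U t => [|k IH] U t uU /=; first by rewrite inE; case: t.
have remU x z : (z \in rem x U) = (z != x) && (z \in U) by rewrite mem_rem_uniq.
apply/allpairsPdep/idP => [[x [t' [xU ht' ->]]]|].
  move: ht'; rewrite IH ?rem_uniq // => /and3P [/eqP st' ut' /allP at'] /=.
  rewrite st' eqxx ut' xU /= andbT; apply/andP; split.
    by apply/negP => /at'; rewrite /= remU eqxx.
  by apply/allP => z /at'; rewrite /= remU => /andP [].
case: t => [|x t'] //= /and3P [/eqP [st'] /andP [xt' ut'] /andP [xU /allP at']].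
exists x, t'; split => //; rewrite IH ?rem_uniq // st' eqxx ut' /=.
apply/allP => z zt'; rewrite /= remU; apply/andP; split; last exact: at'.
by apply: contraNneq xt' => <-.
Qed.

Lemma arrangements_uniq k U : uniq U -> uniq (arrangements k U).
Proof.
elim: k U => [|k IH] U uU //=.
apply: allpairs_uniq_dep => //; first by move=> x _; apply/IH/rem_uniq.
by move=> [x1 t1] [x2 t2] _ _ /= [-> ->].
Qed.

Section BigArrangements.
Variable R : nmodType.
Implicit Type H : seq T -> R.

Lemma big_arrangementsS k U H :
  \sum_(s <- arrangements k.+1 U) H s
  = \sum_(x <- U) \sum_(t <- arrangements k (rem x U)) H (x :: t).
Proof. by rewrite /= big_allpairs_dep. Qed.

Lemma big_arrangements_map (f : T -> T) k U H : injective f ->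
  \sum_(s <- arrangements k (map f U)) H s
  = \sum_(s <- arrangements k U) H (map f s).
Proof.
move=> f_inj; elim: k U H => [|k IH] U H /=; first by rewrite !big_seq1.
rewrite !big_allpairs_dep big_map; apply: eq_bigr => x _.
have -> : rem (f x) (map f U) = map f (rem x U).
  elim: U {IH} => //= y U ->; rewrite (inj_eq f_inj).
  by case: eqP.
exact: (IH _ (fun t => H (f x :: t))).
Qed.

Lemma perm_big_arrangements k U V H : uniq U -> perm_eq U V ->
  \sum_(s <- arrangements k U) H s = \sum_(s <- arrangements k V) H s.
Proof.
move=> uU pUV; have uV : uniq V by rewrite -(perm_uniq pUV).
apply/perm_big/uniq_perm; rewrite ?arrangements_uniq // => t.
rewrite !mem_arrangements //; congr [&& _, _ & _].
by apply: eq_all => z /=; rewrite (perm_mem pUV).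
Qed.

Definition rems (b U : seq T) : seq T := foldl (fun V x => rem x V) U b.

Lemma big_arrangements_cat k r U H :
  \sum_(s <- arrangements (k + r) U) H s
  = \sum_(b <- arrangements k U) \sum_(s <- arrangements r (rems b U)) H (b ++ s).
Proof.
elim: k U H => [|k IH] U H; first by rewrite /= big_seq1.
rewrite addSn !big_arrangementsS; apply: eq_bigr => x _.
exact: (IH _ (fun s => H (x :: s))).
Qed.

Lemma size_rems k U b : b \in arrangements k U -> size (rems b U) = (size U - k)%N.
Proof.
elim: k U b => [|k IH] U b /=; first by rewrite inE subn0 => /eqP ->.
case/allpairsPdep => x [t [xU /IH ht ->]] /=.
by rewrite ht size_rem // subnS -subn1 subnAC subn1.
Qed.

Lemma big_arrangements_take k r U H :
  \sum_(s <- arrangements (k + r) U) H (take k s)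
  = \sum_(b <- arrangements k U) H b *+ (size U - k) ^_ r.
Proof.
rewrite big_arrangements_cat; apply: eq_big_seq => b b_arr.
have /size_mem_arrangements b_size := b_arr.
rewrite (eq_bigr (fun=> H b)) => [|s _]; last by rewrite takel_cat -b_size ?take_size.
by rewrite big_const_seq iter_addr_0 count_predT size_arrangements (size_rems b_arr).
Qed.

Lemma big_arrangements_rot k U H j : uniq U ->
  \sum_(s <- arrangements k U) H (rot j s) = \sum_(s <- arrangements k U) H s.
Proof.
move=> uU; rewrite -(big_map (rot j) xpredT H); apply/perm_big/uniq_perm.
- by rewrite (map_inj_uniq (@rot_inj j _)) arrangements_uniq.
- exact: arrangements_uniq.
have mem_rot_arr s : (rot j s \in arrangements k U) = (s \in arrangements k U).
  by rewrite !mem_arrangements // size_rot rot_uniq (eq_all_r (mem_rot j s)).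
move=> s; apply/mapP/idP => [[s' hs' ->]|hs]; first by rewrite mem_rot_arr.
by exists (rotr j s); rewrite ?rotrK // -mem_rot_arr rotrK.
Qed.

End BigArrangements.
End Arrangements.

Lemma big_arrangements_rem_tperm (T : finType) (R : nmodType) k (U : seq T)
    (H : seq T -> R) x y :
  uniq U -> x \in U -> y \in U ->
  \sum_(s <- arrangements k (rem y U)) H s
  = \sum_(s <- arrangements k (rem x U)) H (map (tperm x y) s).
Proof.
move=> uU xU yU; rewrite -big_arrangements_map; last exact: perm_inj.
have remU z w : (z \in rem w U) = (z != w) && (z \in U) by rewrite mem_rem_uniq.
symmetry; apply: perm_big_arrangements.
  by rewrite map_inj_uniq ?rem_uniq //; apply: perm_inj.
apply: uniq_perm; rewrite ?map_inj_uniq ?rem_uniq //; try apply: perm_inj.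
move=> z; rewrite -{1}(tpermK x y z) (mem_map (@perm_inj _ (tperm x y))) !remU.
case: (tpermP x y z) => [->|->|/eqP zx /eqP zy]; rewrite ?xU ?yU ?eqxx //=.
- by rewrite eq_sym.
- by rewrite zx zy.
Qed.

Definition mean (R : numFieldType) (A : Type) (xs : seq A) (f : A -> R) : R :=
  (\sum_(x <- xs) f x) / (size xs)%:R.

Section Mean.
Variables (R : numFieldType) (A : eqType).
Implicit Types (xs : seq A) (f g : A -> R) (a c : R).

Lemma meanD xs f g : mean xs (fun x => f x + g x) = mean xs f + mean xs g.
Proof. by rewrite /mean big_split mulrDl. Qed.

Lemma meanB xs f g : mean xs (fun x => f x - g x) = mean xs f - mean xs g.
Proof. by rewrite /mean sumrB mulrBl. Qed.

Lemma meanZ xs a f : mean xs (fun x => a * f x) = a * mean xs f.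
Proof. by rewrite /mean -mulr_sumr mulrA. Qed.

Lemma mean_cst xs a : (0 < size xs)%N -> mean xs (fun=> a) = a.
Proof.
move=> xs_gt0; rewrite /mean big_const_seq iter_addr_0 count_predT -[a *+ _]mulr_natr.
by rewrite mulfK // pnatr_eq0 -lt0n.
Qed.

Lemma ler_mean xs f g : {in xs, forall x, f x <= g x} -> mean xs f <= mean xs g.
Proof.
move=> fg; rewrite /mean ler_wpM2r ?invr_ge0 // !big_seq.
by apply: ler_sum => x /fg.
Qed.

Lemma normr_mean_le xs f c : (0 < size xs)%N ->
  {in xs, forall x, `|f x| <= c} -> `|mean xs f| <= c.
Proof.
move=> xs_gt0 fc; rewrite /mean normrM normfV normr_nat ler_pdivrMr ?ltr0n //.
apply: le_trans (ler_norm_sum _ _ _) _.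
rewrite -[X in _ <= X * _](mean_cst c xs_gt0) /mean mulfVK ?pnatr_eq0 -?lt0n //.
by rewrite !big_seq; apply: ler_sum => x /fc.
Qed.

Lemma normr_sub_mean_le xs f c x : x \in xs ->
  {in xs, forall y, `|f x - f y| <= c} -> `|f x - mean xs f| <= c.
Proof.
move=> xs_x fc; have xs_gt0 : (0 < size xs)%N by case: (xs) xs_x.
by rewrite -{1}(mean_cst (f x) xs_gt0) -meanB; apply: normr_mean_le.
Qed.

Lemma mean_sub_mean xs f : (0 < size xs)%N ->
  mean xs (fun x => f x - mean xs f) = 0.
Proof. by move=> xs_gt0; rewrite meanB mean_cst ?subrr. Qed.

End Mean.

Lemma mean_arrangementsS (R : numFieldType) (T : eqType) k (U : seq T)
    (G : seq T -> R) :
  mean (arrangements k.+1 U) G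
  = mean U (fun x => mean (arrangements k (rem x U)) (fun t => G (x :: t))).
Proof.
rewrite /mean big_arrangementsS size_arrangements ffactnS natrM invfM.
rewrite [in RHS](eq_big_seq (fun x =>
    (\sum_(t <- arrangements k (rem x U)) G (x :: t)) / ((size U).-1 ^_ k)%:R)).
  by rewrite -mulr_suml mulrA mulrAC.
by move=> x xU; rewrite size_arrangements size_rem.
Qed.

Lemma mean_arrangements_rem_tperm (R : numFieldType) (T : finType) k (U : seq T)
    (H : seq T -> R) x y :
  uniq U -> x \in U -> y \in U ->
  mean (arrangements k (rem y U)) H
  = mean (arrangements k (rem x U)) (fun s => H (map (tperm x y) s)).
Proof.
move=> uU xU yU; rewrite /mean (big_arrangements_rem_tperm _ _ uU xU yU).
by rewrite !size_arrangements !size_rem.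
Qed.

Lemma expR_le_quadratic (R : realType) (u : R) :
  `|u| <= 1/2 -> expR u <= 1 + u + 2 * u ^+ 2.
Proof.
rewrite ler_norml => /andP [u_ge u_le].
have expRN_ge : 1 - u <= expR (- u) by have := expR_ge1Dx (- u); lra.
have expR_mul_le : expR u * (1 - u) <= 1.
  have : expR u * expR (- u) = 1 by rewrite -expRD subrr expR0.
  have := expR_gt0 u; nra.
have quad_mul_ge : 1 <= (1 - u) * (1 + u + 2 * u ^+ 2).
  have : 0 <= u ^+ 2 * (1 - 2 * u) by apply: mulr_ge0; [apply: sqr_ge0 | lra].
  nra.
have := expR_gt0 u; have : 0 <= u ^+ 2 by apply: sqr_ge0.
nra.
Qed.

Lemma mean_expR_sub_mean_le (R : realType) (A : eqType) (xs : seq A)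
    (f : A -> R) (lam c : R) :
  (0 < size xs)%N -> {in xs, forall x, `|f x - mean xs f| <= c} ->
  `|lam| * c <= 1/2 ->
  mean xs (fun x => expR (lam * (f x - mean xs f))) <= expR (2 * lam ^+ 2 * c ^+ 2).
Proof.
move=> xs_gt0 f_dev lamc.
apply: (@le_trans _ _ (mean xs (fun x =>
    1 + lam * (f x - mean xs f) + 2 * (lam ^+ 2 * c ^+ 2)))).
  apply: ler_mean => x /f_dev dev.
  have u_le : `|lam * (f x - mean xs f)| <= 1/2.
    by rewrite normrM; apply: le_trans lamc; apply: ler_wpM2l.
  apply: le_trans (expR_le_quadratic u_le) _.
  rewrite lerD2l exprMn ler_wpM2l // ler_wpM2l ?sqr_ge0 //.
  by rewrite -real_normK ?num_real // lerXn2r ?nnegrE // (le_trans _ dev).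
rewrite !meanD meanZ mean_sub_mean // !mean_cst // mulr0 addr0.
have := expR_ge1Dx (2 * lam ^+ 2 * c ^+ 2); lra.
Qed.

Lemma chernoff_mean (R : realType) (A : eqType) (xs : seq A) (D : A -> R) (c v a : R) :
  0 < c -> 0 < v -> 0 < a -> {in xs, forall x, D x <= 2 * c * v} ->
  (forall lam, 0 <= lam -> lam * c <= 1/2 ->
     mean xs (fun x => expR (lam * D x)) <= expR (2 * lam ^+ 2 * c ^+ 2 * v)) ->
  mean xs (fun x => ((a <= D x)%R)%:R) <= expR (- (a ^+ 2 / (8 * c ^+ 2 * v))).
Proof.
move=> c_gt0 v_gt0 a_gt0 D_le mgf.
(* The optimal [lam] violates [lam * c <= 1/2] only when [a > 2 c v], and then the
   event is empty. *)
have [a_large|a_le] := ltP (2 * c * v) a.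
  apply: le_trans (ltW (expR_gt0 _)); rewrite (_ : mean _ _ = 0) //.
  rewrite /mean big_seq big1 ?mul0r // => x /D_le Dx.
  by rewrite (_ : (a <= D x) = false) //; apply/negbTE; rewrite -ltNge; lra.
have cv_gt0 : 0 < 4 * c ^+ 2 * v by rewrite !mulr_gt0 // exprn_gt0.
pose lam := a / (4 * c ^+ 2 * v).
have lam_ge0 : 0 <= lam by rewrite divr_ge0 // ltW.
have lamc : lam * c <= 1/2.
  rewrite /lam mulrAC ler_pdivrMr // expr2.
  have : a * c <= 2 * c * v * c by rewrite ler_wpM2r // ltW.
  lra.
apply: (@le_trans _ _ (mean xs (fun x => expR (- (lam * a)) * expR (lam * D x)))).
  apply: ler_mean => x _; rewrite -expRD; have [aD|_] /= := boolP (a <= D x).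
    have : 0 <= - (lam * a) + lam * D x by rewrite addrC subr_ge0 ler_wpM2l.
    have := expR_ge1Dx (- (lam * a) + lam * D x); lra.
  by rewrite ltW ?expR_gt0.
rewrite meanZ; apply: le_trans (ler_wpM2l (ltW (expR_gt0 _)) (mgf _ lam_ge0 lamc)) _.
rewrite -expRD /lam le_eqVlt; apply/orP; left; apply/eqP; congr expR.
by field; rewrite !gt_eqF // ?exprn_gt0.
Qed.

Section TpermLipschitz.
Variables (R : numFieldType) (T : finType).
Implicit Types (U : seq T) (F : seq T -> R) (c : R).

Definition tperm_lipschitz k U F c :=
  forall s y z, s \in arrangements k U -> y \in U -> z \in U ->
    `|F (map (tperm y z) s) - F s| <= c.

Lemma tperm_lipschitz_rem k U F c x : uniq U -> x \in U ->
  tperm_lipschitz k.+1 U F c -> tperm_lipschitz k (rem x U) (fun t => F (x :: t)) c.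
Proof.
move=> uU xU F_lip s y z s_arr yU' zU'.
have remU w : (w \in rem x U) = (w != x) && (w \in U) by rewrite mem_rem_uniq.
move: yU' zU'; rewrite !remU => /andP [yx yU] /andP [zx zU].
have -> : x :: map (tperm y z) s = map (tperm y z) (x :: s) by rewrite /= tpermD.
apply: F_lip => //.
by apply/allpairsPdep; exists x, s.
Qed.

Lemma conditional_mean_lipschitz k U F c x y :
  uniq U -> size U = k.+1 -> tperm_lipschitz k.+1 U F c -> x \in U -> y \in U ->
  `|mean (arrangements k (rem y U)) (fun t => F (y :: t))
    - mean (arrangements k (rem x U)) (fun t => F (x :: t))| <= c.
Proof.
move=> uU sU F_lip xU yU.
rewrite (mean_arrangements_rem_tperm _ _ uU xU yU) -meanB.
apply: normr_mean_le => [|t t_arr].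
  by rewrite size_arrangements size_rem // sU ffactnn fact_gt0.
have -> : y :: map (tperm x y) t = map (tperm x y) (x :: t) by rewrite /= tpermL.
apply: F_lip => //.
by apply/allpairsPdep; exists x, t.
Qed.

End TpermLipschitz.

Section ArrangementConcentration.
Variables (R : realType) (T : finType).
Implicit Types (U : seq T) (F : seq T -> R) (c lam : R).

Lemma mean_expR_arrangements_le k U F c lam :
  uniq U -> size U = k -> `|lam| * c <= 1/2 -> tperm_lipschitz k U F c ->
  mean (arrangements k U) (fun s => expR (lam * (F s - mean (arrangements k U) F)))
  <= expR (2 * lam ^+ 2 * c ^+ 2 * k%:R).
Proof.
elim: k U F => [|k IH] U F uU sU lamc F_lip.
  by rewrite /mean /= !big_seq1 !divr1 subrr mulr0 expR0 mulr0 expR0.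
(* Condition on the first entry [x]: the conditional means [cmean x] are within [c] of
   each other (swap [x] and [y]), so Hoeffding's lemma bounds the first step and the
   induction hypothesis the remaining [k] steps. *)
pose cmean x := mean (arrangements k (rem x U)) (fun t => F (x :: t)).
pose E := expR (2 * lam ^+ 2 * c ^+ 2 * k%:R).
have U_gt0 : (0 < size U)%N by rewrite sU.
have cmean_dev : {in U, forall x, `|cmean x - mean U cmean| <= c}.
  move=> x xU; apply: normr_sub_mean_le => // y yU; rewrite distrC.
  exact: conditional_mean_lipschitz.
have cond_bound x : x \in U ->
    mean (arrangements k (rem x U)) (fun t => expR (lam * (F (x :: t) - cmean x))) <= E.
  move=> xU; apply: IH; rewrite ?rem_uniq ?size_rem ?sU //.
  exact: tperm_lipschitz_rem.
rewrite !mean_arrangementsS -/(cmean _).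
apply: (@le_trans _ _ (mean U (fun x => E * expR (lam * (cmean x - mean U cmean))))).
  apply: ler_mean => x xU.
  have -> : (fun t => expR (lam * (F (x :: t) - mean U cmean)))
      = (fun t => expR (lam * (cmean x - mean U cmean))
                  * expR (lam * (F (x :: t) - cmean x))).
    by apply/funext => t; rewrite -expRD; congr expR; ring.
  rewrite meanZ [E * _]mulrC; apply: ler_wpM2l; [exact/ltW/expR_gt0 | exact: cond_bound].
rewrite meanZ.
apply: le_trans
  (ler_wpM2l (ltW (expR_gt0 _)) (mean_expR_sub_mean_le U_gt0 cmean_dev lamc)) _.
by rewrite -expRD /E -[k.+1]addn1 natrD mulrDr mulr1.
Qed.

Lemma arrangements_deviation_le k U F c (a : R) :
  uniq U -> size U = k -> (0 < k)%N -> 0 < c -> 0 < a ->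
  tperm_lipschitz k U F c ->
  {in arrangements k U, forall s, `|F s - mean (arrangements k U) F| <= 2 * c * k%:R} ->
  mean (arrangements k U) (fun s => ((a <= `|F s - mean (arrangements k U) F|)%R)%:R)
  <= 2 * expR (- (a ^+ 2 / (8 * c ^+ 2 * k%:R))).
Proof.
move=> uU sU k_gt0 c_gt0 a_gt0 F_lip F_dev; set M := mean _ F.
have k_gt0R : 0 < k%:R :> R by rewrite ltr0n.
apply: (@le_trans _ _ (mean (arrangements k U)
    (fun s => ((a <= F s - M)%R)%:R + ((a <= M - F s)%R)%:R))).
  apply: ler_mean => s _; rewrite ler_normr opprB.
  by case: (a <= F s - M); case: (a <= M - F s) => /=; lra.
rewrite (meanD _ (fun s => ((a <= F s - M)%R)%:R)) mulr_natl mulr2n.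
apply: lerD; apply: chernoff_mean => //.
- by move=> s /F_dev; rewrite -/M ler_norml; lra.
- move=> lam lam_ge0 lamc; apply: mean_expR_arrangements_le => //.
  by rewrite ger0_norm.
- by move=> s /F_dev; rewrite -/M ler_norml; lra.
- move=> lam lam_ge0 lamc.
  have -> : (fun s => expR (lam * (M - F s))) = (fun s => expR (- lam * (F s - M))).
    by apply/funext => s; congr expR; ring.
  rewrite -sqrrN; apply: mean_expR_arrangements_le => //.
  by rewrite normrN ger0_norm.
Qed.

End ArrangementConcentration.

(* For [s = seq_of_perm sigma] the blocks counted are the tuples of [VD sigma]. *)
Definition block_count (R : numDomainType) (T : Type) (q m : nat) (P : pred (seq T))
    (s : seq T) : R :=
  \sum_(i < m) (P (take q (drop (i * q) s)))%:R.

Lemma block_count_bounds (R : numDomainType) (T : Type) q m (P : pred (seq T)) s :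
  0 <= block_count R q m P s <= m%:R.
Proof.
apply/andP; split; first by apply: sumr_ge0 => i _.
rewrite -[m in m%:R]card_ord -sumr_const; apply: ler_sum => i _.
by case: (P _).
Qed.

Lemma sum_count_blocks (T : Type) q m (p : pred T) (s : seq T) :
  (\sum_(i < m) count p (take q (drop (i * q) s)))%N = count p (take (m * q) s).
Proof.
elim: m => [|m IH]; first by rewrite big_ord0 mul0n take0.
by rewrite big_ord_recr /= IH mulSnr takeD count_cat.
Qed.

Lemma sum_mem_blocks_le1 (R : numDomainType) (T : eqType) q m (s : seq T) y :
  uniq s -> \sum_(i < m) (y \in take q (drop (i * q) s))%:R <= 1 :> R.
Proof.
move=> s_uniq.
rewrite (eq_bigr (fun i : 'I_m => (count_mem y (take q (drop (i * q) s)))%:R)).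
  rewrite -natr_sum sum_count_blocks count_uniq_mem ?take_uniq //.
  by case: (_ \in _).
by move=> i _; rewrite count_uniq_mem // take_uniq // drop_uniq.
Qed.

Lemma block_count_tperm_lipschitz (R : realFieldType) (T : finType) q m
    (P : pred (seq T)) (U : seq T) :
  uniq U -> tperm_lipschitz (q * m) U (block_count R q m P) 2.
Proof.
move=> U_uniq s y z; rewrite mem_arrangements // => /and3P [_ s_uniq _] _ _.
rewrite /block_count -sumrB; apply: le_trans (ler_norm_sum _ _ _) _.
apply: (@le_trans _ _ (\sum_(i < m) ((y \in take q (drop (i * q) s))%:R
                                    + (z \in take q (drop (i * q) s))%:R))); last first.
  by rewrite big_split /= -[2 : R]/(1 + 1); apply: lerD; apply: sum_mem_blocks_le1.
apply: ler_sum => i _; rewrite -map_drop -map_take.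
set B := take q (drop (i * q) s).
have indicator_dist (b b' : bool) : `|b%:R - b'%:R| <= 1 :> R.
  by case: b; case: b'; rewrite ?subrr ?normr0 ?subr0 ?sub0r ?normrN ?normr1.
case yB: (y \in B); case zB: (z \in B);
  try by apply: le_trans (indicator_dist _ _) _; rewrite /=; lra.
rewrite map_id_in ?subrr ?normr0 // => w wB.
by rewrite tpermD //; [apply: contraFneq _ yB | apply: contraFneq _ zB] => ->.
Qed.

Lemma mean_block_count (R : numFieldType) (T : eqType) q m (P : pred (seq T))
    (U : seq T) :
  uniq U -> size U = (q * m)%N -> (0 < m)%N ->
  mean (arrangements (q * m) U) (block_count R q m P)
  = m%:R * (count P (arrangements q U))%:R / ((q * m) ^_ q)%:R.
Proof.
move=> U_uniq U_size m_gt0; have q_le : (q <= q * m)%N by rewrite leq_pmulr.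
have block_rot (i : 'I_m) :
    \sum_(s <- arrangements (q * m) U) (P (take q (drop (i * q) s)))%:R
    = \sum_(s <- arrangements (q * m) U) (P (take q s))%:R :> R.
  rewrite -(big_arrangements_rot (q * m) (fun s => (P (take q s))%:R) (i * q) U_uniq).
  apply: eq_big_seq => s /size_mem_arrangements s_size.
  rewrite /rot takel_cat // size_drop s_size.
  have : (i.+1 * q <= m * q)%N by rewrite leq_mul2r ltn_ord orbT.
  rewrite mulSn; lia.
have prefix_sum :
    \sum_(s <- arrangements (q * m) U) (P (take q s))%:R
    = (count P (arrangements q U))%:R *+ (q * m - q)`! :> R.
  rewrite -[in arrangements (q * m) U](subnKC q_le).
  rewrite (big_arrangements_take _ _ _ (fun b => (P b)%:R)).
  rewrite sumrMnl U_size ffactnn -sum1_count natr_sum.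
  by congr (_ *+ _); rewrite [RHS]big_mkcond; apply: eq_bigr => b _; case: (P b).
rewrite /mean /block_count exchange_big /= (eq_bigr _ (fun i _ => block_rot i)).
rewrite sumr_const card_ord prefix_sum size_arrangements U_size ffactnn.
rewrite -[(q * m)`!](ffact_fact q_le) natrM -[_ *+ m]mulr_natr -mulr_natr.
have fact_neq0 : ((q * m - q)`!)%:R != 0 :> R by rewrite pnatr_eq0 -lt0n fact_gt0.
have ffact_neq0 : ((q * m) ^_ q)%:R != 0 :> R by rewrite pnatr_eq0 -lt0n ffact_gt0.
by field; rewrite ffact_neq0 fact_neq0.
Qed.

Definition seq_of_perm n (s : {perm 'I_n}) : seq 'I_n := map s (enum 'I_n).

Lemma nth_seq_of_perm n (s : {perm 'I_n}) x0 (i : 'I_n) : nth x0 (seq_of_perm s) i = s i.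
Proof. by rewrite (nth_map i) ?size_enum_ord ?ltn_ord // nth_ord_enum. Qed.

Lemma seq_of_perm_inj n : injective (@seq_of_perm n).
Proof.
move=> s1 s2 eq_s; apply/permP => i.
by rewrite -(nth_seq_of_perm s1 i) eq_s nth_seq_of_perm.
Qed.

Lemma perm_eq_seq_of_perm n :
  perm_eq (map (@seq_of_perm n) (enum {perm 'I_n})) (arrangements n (enum 'I_n)).
Proof.
have enum_uniq_n := enum_uniq 'I_n.
apply: uniq_perm; rewrite ?arrangements_uniq ?enum_uniq //.
  by rewrite (map_inj_uniq (@seq_of_perm_inj n)) enum_uniq.
move=> t; apply/mapP/idP => [[p _ ->]|].
  rewrite mem_arrangements // size_map size_enum_ord eqxx.
  rewrite (map_inj_uniq (@perm_inj _ p)) enum_uniq_n /=.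
  by apply/allP => x _; rewrite /= mem_enum.
rewrite mem_arrangements // => /and3P [/eqP t_size t_uniq _].
pose f i := nth i t i.
have f_inj : injective f.
  move=> i j; rewrite /f (set_nth_default i j) ?t_size ?ltn_ord //.
  by move/eqP; rewrite nth_uniq ?t_size ?ltn_ord // => /eqP /val_inj.
exists (perm f_inj); first by rewrite mem_enum.
symmetry; case E: t => [|x0 t'].
  by apply: size0nil; rewrite size_map size_enum_ord -t_size E.
rewrite -E; apply: (@eq_from_nth _ x0); first by rewrite size_map size_enum_ord t_size.
move=> i; rewrite size_map size_enum_ord => i_lt.
by rewrite (nth_seq_of_perm _ _ (Ordinal i_lt)) permE /f (set_nth_default x0) ?t_size.
Qed.

Lemma prob_perm_mean (R : realType) n (E : pred (seq 'I_n)) :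
  prob_perm R (fun s => E (seq_of_perm s))
  = mean (arrangements n (enum 'I_n)) (fun t => (E t)%:R).
Proof.
rewrite /prob_perm /mean card_Sn size_arrangements size_enum_ord ffactnn.
rewrite -(perm_big _ (perm_eq_seq_of_perm n)) big_map big_enum /=.
rewrite -sum1dep_card natr_sum big_mkcond /=.
by congr (_ / _); apply: eq_bigr => s _; case: (E _).
Qed.

Lemma val_block q m (s : {perm 'I_(q * m)}) (i : 'I_m) :
  val (block s i) = take q (drop (i * q) (seq_of_perm s)).
Proof.
have take_size : size (take q (drop (i * q) (seq_of_perm s))) = q.
  rewrite size_takel // size_drop size_map size_enum_ord.
  have := ltn_ord i; nia.
case: q s take_size => [|q] s take_size.
  by rewrite take0; apply: size0nil; rewrite size_tuple.
apply: (@eq_from_nth _ (s (Ordinal (blk_lt i ord0)))).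
  by rewrite size_tuple take_size.
move=> j; rewrite size_tuple => j_lt.
rewrite (nth_mktuple _ _ (Ordinal j_lt)) nth_take // nth_drop.
by rewrite (nth_seq_of_perm s _ (Ordinal (blk_lt i (Ordinal j_lt)))).
Qed.

Lemma block_inj q m (s : {perm 'I_(q * m)}) : (0 < q)%N -> injective (block s).
Proof.
case: q s => [|q] s // _ i j /(congr1 (fun t => tnth t ord0)).
rewrite !tnth_mktuple => /perm_inj /(congr1 val) /=; rewrite !addn0 => /eqP.
by rewrite eqn_mul2r /= => /eqP /val_inj.
Qed.

Lemma Ncount_block_count (R : numDomainType) q m (S : {set q.-tuple 'I_(q * m)})
    (s : {perm 'I_(q * m)}) : (0 < q)%N ->
  (Ncount S s)%:R = block_count R q m (fun b => b \in map val (enum S)) (seq_of_perm s).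
Proof.
move=> q_gt0; rewrite /Ncount.
have -> : S :&: VD s = block s @: [set i | block s i \in S].
  apply/setP => t; rewrite inE /VD; apply/andP/imsetP => [[tS /imsetP [i _ ti]]|[i]].
    by exists i; rewrite ?inE -?ti.
  by rewrite inE => bi_S ->; split => //; apply: imset_f.
rewrite card_imset; last exact: block_inj.
rewrite -sum1dep_card natr_sum big_mkcond /block_count /=.
apply: eq_bigr => i _; rewrite -val_block (mem_map val_inj) mem_enum.
by case: (_ \in _).
Qed.

Lemma count_tuples (T : finType) q (S : {set q.-tuple T}) :
  {in S, forall t : q.-tuple T, uniq t} ->
  count (fun b => b \in map val (enum S)) (arrangements q (enum T)) = #|S|.
Proof.
move=> S_uniq; rewrite -size_filter cardE -(size_map val).
apply/perm_size/uniq_perm.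
- exact/filter_uniq/arrangements_uniq/enum_uniq.
- by rewrite (map_inj_uniq val_inj) enum_uniq.
move=> b; rewrite mem_filter; apply/andP/idP => [[] //|b_S]; split => //.
case/mapP: b_S => t; rewrite mem_enum => tS ->.
rewrite mem_arrangements ?enum_uniq // size_tuple eqxx S_uniq //=.
by apply/allP => x _; rewrite /= mem_enum.
Qed.

Lemma ffact_le_expn n k : (n ^_ k <= n ^ k)%N.
Proof.
elim: k => [|k IH]; first by rewrite ffactn0 expn0.
by rewrite ffactnSr expnS mulnC leq_mul // leq_subr.
Qed.

Lemma expn_le_ffact_add n k : (n ^ k * n <= n ^_ k * n + k ^ 2 * n ^ k)%N.
Proof.
elim: k => [|k IH]; first by rewrite ffactn0 expn0 mul0n addn0.
have ffact_le := ffact_le_expn n k.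
rewrite ffactnSr expnS; have [k_le|n_lt] := leqP k n; last first.
  have -> : (n - k = 0)%N by apply/eqP; rewrite subn_eq0 ltnW.
  have : (n <= k.+1 ^ 2)%N by rewrite expnS expn1; nia.
  nia.
move: IH ffact_le; move: (n ^_ k)%N (n ^ k)%N => X Y IH ffact_le.
have [d n_eq] : exists d, n = (d + k)%N by exists (n - k)%N; rewrite subnK.
rewrite n_eq addnK in IH ffact_le *; rewrite !expnS ?expn1 ?expn0 in IH *.
have : (X * (d + k) * k <= Y * (d + k) * k)%N by rewrite !leq_mul2r ffact_le !orbT.
nia.
Qed.

Lemma ffact_ratio_bounds (R : realFieldType) (qr mr a L e : R) :
  0 < e -> 0 < qr -> 0 < mr -> 0 < a -> 0 < L ->
  L <= qr * mr * a -> qr * mr * a <= L + qr ^+ 2 * a ->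
  2 * qr ^+ 2 <= qr * mr -> 4 * qr ^+ 2 <= e * (qr * mr) ->
  (qr * a)^-1 <= mr / L <= (1 + e / 2) / (qr * a).
Proof.
move=> e_gt0 qr_gt0 mr_gt0 a_gt0 L_gt0 L_le L_ge n_ge en_ge.
have qa_gt0 : 0 < qr * a by rewrite mulr_gt0.
have lower : mr / L - (qr * a)^-1 = (qr * mr * a - L) / (qr * a * L).
  by field; rewrite !gt_eqF.
have upper : (1 + e / 2) / (qr * a) - mr / L
             = ((1 + e / 2) * L - qr * mr * a) / (qr * a * L).
  by field; rewrite !gt_eqF.
have qqa_le : 2 * qr ^+ 2 * a <= qr * mr * a by rewrite ler_wpM2r // ltW.
have eqa_ge : 4 * qr ^+ 2 * a <= e * (qr * mr) * a by rewrite ler_wpM2r // ltW.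
have eL_ge : e * (qr * mr * a) <= e * (2 * L) by apply: ler_wpM2l; [exact: ltW | lra].
have den_ge0 : 0 <= qr * a * L by rewrite ltW // mulr_gt0.
by apply/andP; split; rewrite -subr_ge0 ?lower ?upper; apply: divr_ge0 => //; lra.
Qed.

Section Deviation.
Variables (R : realType) (q m : nat) (S : {set q.-tuple 'I_(q * m)}) (e : R).
Hypotheses (q_gt0 : (0 < q)%N) (m_gt0 : (0 < m)%N) (e_gt0 : 0 < e).
Hypothesis S_uniq : {in S, forall t : q.-tuple 'I_(q * m), uniq t}.
Hypotheses (n_ge : 2 * q%:R ^+ 2 <= (q * m)%:R :> R)
           (en_ge : 4 * q%:R ^+ 2 <= e * (q * m)%:R).

Let n : R := (q * m)%:R.
Let mu0 : R := #|S|%:R / (q%:R * n ^+ (q - 1)).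
Let in_S (b : seq 'I_(q * m)) := b \in map val (enum S).

Lemma mean_block_count_bounds :
  mu0 <= mean (arrangements (q * m) (enum 'I_(q * m))) (block_count R q m in_S)
      <= (1 + e / 2) * mu0.
Proof.
rewrite mean_block_count ?enum_uniq ?size_enum_ord // count_tuples //.
set a := n ^+ (q - 1); set L := ((q * m) ^_ q)%:R : R.
have n_gt0 : 0 < n by rewrite ltr0n muln_gt0 q_gt0.
have a_gt0 : 0 < a by rewrite exprn_gt0.
have nq : n ^+ q = n * a by rewrite /a subn1 -exprS prednK.
have n_eq : n = q%:R * m%:R by rewrite /n natrM.
have L_le : L <= q%:R * m%:R * a.
  by rewrite -n_eq -nq /L /n -natrX ler_nat ffact_le_expn.
have L_ge : q%:R * m%:R * a <= L + q%:R ^+ 2 * a.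
  have approx : n ^+ q * n <= L * n + q%:R ^+ 2 * n ^+ q.
    by rewrite /n /L -!natrX -!natrM -natrD ler_nat expn_le_ffact_add.
  rewrite nq in approx; rewrite -n_eq -(ler_pM2r n_gt0); apply: le_trans approx _.
  by rewrite le_eqVlt; apply/orP; left; apply/eqP; ring.
have L_gt0 : 0 < L by rewrite ltr0n ffact_gt0 leq_pmulr.
have qm_ge : 2 * q%:R ^+ 2 <= q%:R * m%:R :> R by rewrite -n_eq.
have eqm_ge : 4 * q%:R ^+ 2 <= e * (q%:R * m%:R) by rewrite -n_eq.
have q_gt0R : 0 < q%:R :> R by rewrite ltr0n.
have m_gt0R : 0 < m%:R :> R by rewrite ltr0n.
have /andP [lower upper] :=
  ffact_ratio_bounds e_gt0 q_gt0R m_gt0R a_gt0 L_gt0 L_le L_ge qm_ge eqm_ge.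
have S_ge0 : 0 <= #|S|%:R :> R by [].
rewrite /mu0 -/a mulrCA (mulrC m%:R) -mulrA.
by apply/andP; split; apply: ler_wpM2l.
Qed.

Lemma Ncount_deviation_prob_le : (0 < #|S|)%N ->
  prob_perm R (fun s : {perm 'I_(q * m)} =>
    ~~ ((1 - e) * mu0 <= (Ncount S s)%:R <= (1 + e) * mu0))
  <= 2 * expR (- ((e * mu0) ^+ 2 / (128 * n))).
Proof.
move=> S_gt0.
set U := enum 'I_(q * m); set F := block_count R q m in_S.
set M := mean (arrangements (q * m) U) F.
have n_gt0 : (0 < q * m)%N by rewrite muln_gt0 q_gt0.
have mu0_gt0 : 0 < mu0.
  by rewrite divr_gt0 ?mulr_gt0 ?exprn_gt0 ?ltr0n.
have /andP [M_ge M_le] : mu0 <= M <= (1 + e / 2) * mu0 := mean_block_count_bounds.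
have -> : prob_perm R (fun s : {perm 'I_(q * m)} =>
    ~~ ((1 - e) * mu0 <= (Ncount S s)%:R <= (1 + e) * mu0))
  = prob_perm R (fun s => ~~ ((1 - e) * mu0 <= F (seq_of_perm s) <= (1 + e) * mu0)).
  by congr prob_perm; apply/funext => s; rewrite (Ncount_block_count R).
rewrite (prob_perm_mean R (fun t => ~~ ((1 - e) * mu0 <= F t <= (1 + e) * mu0))).
(* As [mu0 <= M <= (1 + e/2) mu0], leaving [(1 +- e) mu0] forces [|F - M| >= e mu0 / 2]. *)
apply: (@le_trans _ _ (mean (arrangements (q * m) U)
    (fun t => ((e * mu0 / 2 <= `|F t - M|)%R)%:R))).
  apply: ler_mean => t _.
  have [//|] /= := boolP (e * mu0 / 2 <= `|F t - M|); first by case: (_ && _).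
  rewrite -ltNge ltr_norml => /andP [lo hi].
  have emu0_gt0 : 0 < e * mu0 by rewrite mulr_gt0.
  have -> // : (1 - e) * mu0 <= F t <= (1 + e) * mu0 by apply/andP; split; lra.
apply: le_trans (arrangements_deviation_le (c := 2) (a := e * mu0 / 2)
    (enum_uniq _) (size_enum_ord _) n_gt0 _ _ _ _) _.
- by rewrite ltr0n.
- by apply: divr_gt0; [exact: mulr_gt0 | rewrite ltr0n].
- by apply: block_count_tperm_lipschitz; apply: enum_uniq.
- move=> t t_arr; apply: normr_sub_mean_le => // t' _.
  have /andP [Ft_ge Ft_le] : 0 <= F t <= m%:R := block_count_bounds _ _ _ _ _.
  have /andP [Ft'_ge Ft'_le] : 0 <= F t' <= m%:R := block_count_bounds _ _ _ _ _.
  have : m%:R <= 2 * 2 * (q * m)%:R :> R.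
    by rewrite -!natrM ler_nat (leq_trans (leq_pmull m q_gt0)) // leq_pmull.
  rewrite ler_norml; lra.
have -> : (e * mu0 / 2) ^+ 2 / (8 * 2 ^+ 2 * (q * m)%:R) = (e * mu0) ^+ 2 / (128 * n).
  by rewrite /n; field; rewrite !pnatr_eq0 -!lt0n q_gt0 m_gt0.
by [].
Qed.
End Deviation.

Lemma exprn_double_pred (R : pzSemiRingType) (x : R) q : (0 < q)%N ->
  x ^+ (2 * q - 1) = x * (x ^+ (q - 1)) ^+ 2.
Proof. by move=> q_gt0; rewrite -exprM -exprS; congr (_ ^+ _); lia. Qed.

Section GrowthRegime.
Variables (R : realType) (q m : nat) (S : {set q.-tuple 'I_(q * m)}) (e K : R).
Hypotheses (q_gt0 : (0 < q)%N) (e_gt0 : 0 < e) (K_gt0 : 0 < K).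
Hypothesis S_uniq : {in S, forall t : q.-tuple 'I_(q * m), uniq t}.

Local Notation n := ((q * m)%:R : R).
Local Notation a := (n ^+ (q - 1)).
Local Notation Sz := (#|S|%:R : R).
(* The [ln 2] part of [A] yields [4 q^2 <= e n], the [128 q^2 K] part the exponent. *)
Local Notation A := (128 * q%:R ^+ 2 * K + (ln 2)^-1).

Hypotheses (n_ge : 16 * q%:R ^+ 4 <= n)
           (growth : A <= e ^+ 2 * Sz ^+ 2 / (n ^+ (2 * q - 1) * ln n)).

(* [lra] does not see section hypotheses, hence the [move:]s below. *)
Let q_ge1 : 1 <= q%:R :> R. Proof. by rewrite ler1n. Qed.
Let q2_ge1 : 1 <= q%:R ^+ 2 :> R. Proof. by rewrite exprn_ege1. Qed.
Let q4_ge : q%:R ^+ 2 <= q%:R ^+ 4 :> R. Proof. by rewrite ler_weXn2l. Qed.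
Let n_ge2 : 2 <= n. Proof. by move: n_ge q2_ge1 q4_ge; lra. Qed.
Let m_gt0 : (0 < m)%N.
Proof. by rewrite lt0n; apply: contraTneq n_ge2 => ->; rewrite muln0 -ltNge ltr0n. Qed.
Let a_gt0 : 0 < a. Proof. by rewrite exprn_gt0 //; move: n_ge2; lra. Qed.
Let ln2_gt0 : 0 < ln (2 : R). Proof. by rewrite ln_gt0 //; lra. Qed.
Let lnn_gt0 : 0 < ln n. Proof. by rewrite ln_gt0 //; move: n_ge2; lra. Qed.
Let den_gt0 : 0 < n * a ^+ 2 * ln n.
Proof. by rewrite !mulr_gt0 ?exprn_gt0 //; move: n_ge2; lra. Qed.
Let A_ge : (ln 2)^-1 <= A. Proof. by rewrite lerDr !mulr_ge0 ?sqr_ge0 // ltW. Qed.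

Lemma growth_mul : A * (n * a ^+ 2 * ln n) <= e ^+ 2 * Sz ^+ 2.
Proof. by rewrite -ler_pdivlMr // -/a -exprn_double_pred. Qed.

Lemma card_le_expn : Sz <= n * a.
Proof.
rewrite /a -exprS subn1 prednK // /Sz /n -natrX ler_nat.
by have := max_card (mem S); rewrite card_tuple card_ord.
Qed.

Lemma card_gt0 : (0 < #|S|)%N.
Proof.
rewrite lt0n; apply/eqP => S0; move: growth_mul; rewrite /Sz S0 expr0n mulr0 /=.
by apply/negP; rewrite -ltNge mulr_gt0 //; apply: lt_le_trans A_ge; rewrite invr_gt0.
Qed.

Lemma eps_mul_n_ge : 4 * q%:R ^+ 2 <= e * n.
Proof.
have ln_le : ln 2 <= ln n by rewrite ler_ln ?posrE //; move: n_ge2; lra.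
have Aln_ge1 : 1 <= A * ln n.
  apply: le_trans (_ : (ln 2)^-1 * ln 2 <= _); first by rewrite mulVf ?gt_eqF.
  by apply: ler_pM => //; rewrite ?invr_ge0 ltW.
have n_le : n <= (e * n) ^+ 2.
  have Sz2_le : e ^+ 2 * Sz ^+ 2 <= e ^+ 2 * (n * a) ^+ 2.
    by rewrite ler_wpM2l ?sqr_ge0 // ler_pXn2r ?nnegrE ?card_le_expn // mulr_ge0 //; lra.
  have na2_le : n * a ^+ 2 <= A * ln n * (n * a ^+ 2).
    by rewrite -[X in X <= _]mul1r ler_wpM2r // ltW.
  rewrite -(ler_pM2r (exprn_gt0 2 a_gt0)); apply: le_trans na2_le _.
  rewrite -mulrA [ln n * _]mulrC; apply: le_trans growth_mul _.
  by apply: le_trans Sz2_le _; rewrite le_eqVlt; apply/orP; left; apply/eqP; ring.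
rewrite -(ler_pXn2r (n := 2)) ?nnegrE ?mulr_ge0 ?exprn_ge0 //;
  by move: n_ge n_ge2 q4_ge e_gt0; lra.
Qed.

Lemma K_ln_le : K * ln n <= (e * (Sz / (q%:R * a))) ^+ 2 / (128 * n).
Proof.
have q_gt0R : 0 < q%:R :> R by rewrite ltr0n.
have n_gt0 : 0 < n by move: n_ge2; lra.
have -> : (e * (Sz / (q%:R * a))) ^+ 2 / (128 * n)
          = e ^+ 2 * Sz ^+ 2 / (128 * q%:R ^+ 2 * (n * a ^+ 2)).
  by field; rewrite gt_eqF // !pnatr_eq0 -!lt0n q_gt0 m_gt0.
rewrite ler_pdivlMr ?mulr_gt0 ?exprn_gt0 //; apply: le_trans growth_mul.
have -> : K * ln n * (128 * q%:R ^+ 2 * (n * a ^+ 2))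
          = 128 * q%:R ^+ 2 * K * (n * a ^+ 2 * ln n) by ring.
by rewrite [in X in _ <= X]mulrDl lerDl mulr_ge0 ?invr_ge0 ?ltW.
Qed.

Lemma Ncount_prob_le_powR :
  prob_perm R (fun s : {perm 'I_(q * m)} =>
      ~~ ((1 - e) * (Sz / (q%:R * a)) <= (Ncount S s)%:R <= (1 + e) * (Sz / (q%:R * a))))
    <= 2 * n `^ (- K).
Proof.
have n2_ge : 2 * q%:R ^+ 2 <= n by move: n_ge q2_ge1 q4_ge; lra.
apply: le_trans
  (Ncount_deviation_prob_le q_gt0 m_gt0 e_gt0 S_uniq n2_ge eps_mul_n_ge card_gt0) _.
rewrite ler_pM2l // /powR gt_eqF; last by move: n_ge2; lra.
by rewrite ler_expR mulNr lerN2 K_ln_le.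
Qed.

End GrowthRegime.

Local Open Scope classical_set_scope.

Theorem lemma3 (R : realType) (q : nat) (hq : (0 < q)%N)
  (eps : nat -> R) (heps : forall m, 0 < eps m)
  (S : forall m : nat, {set q.-tuple 'I_(q * m)})
  (hSdist : forall m (t : q.-tuple 'I_(q * m)), t \in S m -> uniq t)
  (hgrow : (fun m : nat => eps m ^+ 2 * (#|S m|%:R) ^+ 2
              / (((q * m)%:R) ^+ (2 * q - 1) * ln ((q * m)%:R)))
           @ \oo --> +oo) :
  forall K : R, 0 < K ->
    exists C : R, exists M : nat, forall m : nat, (M <= m)%N ->
      prob_perm R (fun s : {perm 'I_(q * m)} =>
          ~~ ((1 - eps m) * (#|S m|%:R / (q%:R * ((q * m)%:R) ^+ (q - 1)))
                <= (Ncount (S m) s)%:R <=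
              (1 + eps m) * (#|S m|%:R / (q%:R * ((q * m)%:R) ^+ (q - 1)))))
        <= C * ((q * m)%:R) `^ (- K).
Proof.
move=> K K_gt0.
have [M0 _ growth] := cvgry_ge hgrow (128 * q%:R ^+ 2 * K + (ln 2)^-1).
exists 2, (maxn M0 (16 * q ^ 4)) => m; rewrite geq_max => /andP [m_ge0 m_ge1].
apply: Ncount_prob_le_powR => //; [exact: hSdist | | exact: growth].
by rewrite -natrX -natrM ler_nat (leq_trans m_ge1) // leq_pmull.
Qed.
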